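(* Let $G$ be a reaction network with one-dimensional stoichiometric subspace and suppose $cap_{pos}(G)<+\infty$. Let $\mathcal W_{nondeg}=\{(\kappa^*,c^* )\in\mathcal W:\text{for }(\kappa^*,c^* ),\text{ all positive steady states of }G\text{ in }\mathcal P_{c^*}\text{ are nondegenerate}\}$. Then $\mathcal W\cap\mathcal B\ne\emptyset$ if and only if $\mathcal W_{nondeg}\cap\mathcal B\neq\emptyset$.
   Context: A reaction network $G$ has species $X_1,\dots,X_s$ and $m$ reactions $\sum_{i}\alpha_{ij}X_i\to\sum_i\beta_{ij}X_i$, $\alpha_{ij},\beta_{ij}\in\mathbb Z_{\ge0}$, $(\alpha_{1j},\dots,\alpha_{sj})\neq(\beta_{1j},\dots,\beta_{sj})$. $\mathcal N$ has entries $\beta_{ij}-\alpha_{ij}$, $S=\mathrm{im}\,\mathcal N$. For $\kappa\in\mathbb R^m_{>0}$, $f(\kappa;x)=\mathcal N(\kappa_1\prod_i x_i^{\alpha_{i1}},\dots,\kappa_m\prod_i x_i^{\alpha_{im}})^\top$. Since $S$ is one-dimensional, species are labelled so that $\beta_{11}-\alpha_{11}\ne0$; for $c\in\mathbb R^{s-1}$, $\mathcal P_c=\{x\in\mathbb R^s_{\ge0}:(\beta_{i1}-\alpha_{i1})x_1-(\beta_{11}-\alpha_{11})x_i=c_{i-1},\ i=2,\dots,s\}$. A steady state is $x\ge0$ with $f(\kappa;x)=0$; positive if $x>0$; nondegenerate if $\mathrm{Jac}_f(x)(S)=S$. $cap_{pos}(G)$ is the maximal $N\in\mathbb Z_{\ge0}\cup\{+\infty\}$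 such that for some $\kappa,c$, $G$ has $N$ positive steady states in $\mathcal P_c$. Notation for $c^*$: $A_1=1,B_1=0$, $A_i=\frac{\beta_{i1}-\alpha_{i1}}{\beta_{11}-\alpha_{11}}$, $B_i=-\frac{c^*_{i-1}}{\beta_{11}-\alpha_{11}}$ ($i\ge2$). $[i]=\{k:A_k\ne0,B_k/A_k=B_i/A_i\}$ if $A_i\ne0$, $[i]=\{k:A_k=0\}$ otherwise; species labelled so that $1,\dots,r$ represent the $r$ distinct classes. $\varphi_k=\min_j\sum_{i\in[k]}\alpha_{ij}$, $\gamma_{kj}=\sum_{i\in[k]}\alpha_{ij}-\varphi_k$. $\mathcal J=\{i:A_i\ne0\}$, $\mathcal H=\{k\in\{1,\dots,r\}\cap\mathcal J:\gamma_{k1},\dots,\gamma_{km}\text{ not all equal}\}$. Standing assumption: if for some rate constants $G$ has $N$ positive steady states in $\mathcal P_{c^*}$ with $0<N<\infty$, species are labelled so that $1\in\mathcal H$. $I_i=(-B_i/A_i,+\infty)$ if $A_i>0$, $(0,+\infty)$ if $A_i=0$, $(0,-B_i/A_i)$ if $A_i<0$; $I=\bigcap_{k\in\mathcal H}I_k$; $\tau\in\mathcal H$ has $A_\tau>0$ with $-B_\tau/A_\tau$ the left endpoint of $I$; $\mathcal L=\{j:\gamma_{\tau j}=0\}$. $\mathcal W=\{(\kappa^*,c^* ):\text{for }\kappa^*,\ G\text{ has }cap_{pos}(G)\text{ positive steady states in }\mathcal P_{c^*}\}$; $\mathcal B=\{(\kappa^*,c^* ):\sum_{j\in\mathcal L}(\beta_{1j}-\alpha_{1j})\kappa^*_j\prod_{i\in\mathcal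 J}|A_i|^{\alpha_{ij}}\prod_{i\notin\mathcal J}B_i^{\alpha_{ij}}\prod_{k\in\mathcal H,k\ne\tau}(\frac{B_k}{|A_k|}-\frac{A_k}{|A_k|}\frac{B_\tau}{A_\tau})^{\gamma_{kj}}>0\}$, all quantities computed from $c^*$. *)

From HB Require Import structures.
From mathcomp Require Import all_boot all_order all_algebra all_fingroup.
From mathcomp Require Import reals.
Set Implicit Arguments. Unset Strict Implicit. Unset Printing Implicit Defensive.
Import Order.TTheory GRing.Theory Num.Theory.
Local Open Scope ring_scope.

(* Species are indexed by 'I_n.+1 (species X_1 is ord0), reactions by 'I_m.+1 (reaction 1 is ord0; m >= 1 is forced by rank N = 1).
   alpha i j, beta i j are the stoichiometric coefficients of reactant/product. *)
Section Network.
Variable R : realType.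
Variables (n m : nat).
Variables (alpha beta : 'I_n.+1 -> 'I_m.+1 -> nat).

Definition valid_network : Prop := forall j : 'I_m.+1, exists i, alpha i j <> beta i j.

Definition stoich : 'M[R]_(n.+1, m.+1) :=
  \matrix_(i, j) ((beta i j)%:R - (alpha i j)%:R).

Definition one_dim : Prop := \rank stoich = 1%N.

Definition pos_rates (kappa : 'I_m.+1 -> R) : Prop := forall j, 0 < kappa j.

Definition rate (kappa : 'I_m.+1 -> R) (x : 'cV[R]_n.+1) : 'cV[R]_m.+1 :=
  \col_j (kappa j * \prod_i (x i ord0) ^+ alpha i j).
Definition fmap (kappa : 'I_m.+1 -> R) (x : 'cV[R]_n.+1) : 'cV[R]_n.+1 :=
  stoich *m rate kappa x.

(* P_c, with c_{i-1} written c i for the species lift ord0 i (i.e. X_{i+1}) *)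
Definition in_P (c : 'I_n -> R) (x : 'cV[R]_n.+1) : Prop :=
  (forall i, 0 <= x i ord0) /\
  forall i : 'I_n,
    stoich (lift ord0 i) ord0 * x ord0 ord0 - stoich ord0 ord0 * x (lift ord0 i) ord0 = c i.

Definition pss (kappa : 'I_m.+1 -> R) (c : 'I_n -> R) (x : 'cV[R]_n.+1) : Prop :=
  (forall i, 0 < x i ord0) /\ in_P c x /\ fmap kappa x = 0.

Definition jac (kappa : 'I_m.+1 -> R) (x : 'cV[R]_n.+1) : 'M[R]_n.+1 :=
  \matrix_(i, k) \sum_j stoich i j *
     (kappa j * ((alpha k j)%:R * x k ord0 ^+ (alpha k j).-1 *
        \prod_(i' | i' != k) x i' ord0 ^+ alpha i' j)).

(* nondegenerate: Jac_f(x)(S) = S, S = column space of N *)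
Definition nondeg (kappa : 'I_m.+1 -> R) (x : 'cV[R]_n.+1) : Prop :=
  (((jac kappa x *m stoich)^T) == stoich^T)%MS.

Definition exactly (kappa : 'I_m.+1 -> R) (c : 'I_n -> R) (N : nat) : Prop :=
  exists l : seq 'cV[R]_n.+1,
    uniq l /\ size l = N /\ forall x, x \in l <-> pss kappa c x.

Definition cap_pos_eq (C : nat) : Prop :=
  (exists kappa c, pos_rates kappa /\ exactly kappa c C) /\
  (forall kappa c, pos_rates kappa -> exists N, exactly kappa c N /\ (N <= C)%N).

Definition inW (C : nat) (kappa : 'I_m.+1 -> R) (c : 'I_n -> R) : Prop :=
  pos_rates kappa /\ exactly kappa c C.

Definition inWnondeg (C : nat) (kappa : 'I_m.+1 -> R) (c : 'I_n -> R) : Prop :=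
  inW C kappa c /\ forall x, pss kappa c x -> nondeg kappa x.

(* A labelling is a permutation sigma of the species (new
   species number i is old species sigma i) together with r.  The compatibility
   class is parametrised by c in the base labelling; basept c is the point of
   the affine line {x : N_{i1} x_1 - N_11 x_i = c_{i-1}} with x_1 = 0, from
   which the relabelled A_i, B_i are computed (x_i = A_i x_1 + B_i). *)
Section Labelling.
Variable c : 'I_n -> R.
Variable sigma : {perm 'I_n.+1}.
Variable r : nat.

Definition basept (i : 'I_n.+1) : R :=
  match unlift ord0 i with
  | Some i' => - c i' / stoich ord0 ord0
  | None => 0
  end.

Definition Acoef (i : 'I_n.+1) : R := stoich (sigma i) ord0 / stoich (sigma ord0) ord0.
Definition Bcoef (i : 'I_n.+1) : R := basept (sigma i) - Acoef i * basept (sigma ord0).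

Definition in_class (i k : 'I_n.+1) : bool :=
  if Acoef i != 0 then (Acoef k != 0) && (Bcoef k / Acoef k == Bcoef i / Acoef i)
  else Acoef k == 0.

Definition classsum (k : 'I_n.+1) (j : 'I_m.+1) : nat :=
  (\sum_(i | in_class k i) alpha (sigma i) j)%N.

Definition gam (k : 'I_n.+1) (j : 'I_m.+1) : nat :=
  (classsum k j - \big[minn/classsum k j]_(j' : 'I_m.+1) classsum k j')%N.

Definition inJ (i : 'I_n.+1) : bool := Acoef i != 0.

Definition inH (k : 'I_n.+1) : bool :=
  [&& (k < r)%N, Acoef k != 0 & [exists j1, exists j2, gam k j1 != gam k j2]].

(* tau in H, A_tau > 0 and -B_tau/A_tau is the left endpoint of
   I = \bigcap_{k in H} I_k (the max of the left endpoints of the I_k) *)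
Definition is_tau (t : 'I_n.+1) : bool :=
  [&& inH t, 0 < Acoef t &
   [forall k, inH k ==>
      (if 0 < Acoef k then - Bcoef k / Acoef k <= - Bcoef t / Acoef t
       else 0 <= - Bcoef t / Acoef t)]].

Definition Bexpr (kappa : 'I_m.+1 -> R) (t : 'I_n.+1) : R :=
  \sum_(j | gam t j == 0%N)
     stoich (sigma ord0) j * kappa j
     * (\prod_(i | inJ i) `|Acoef i| ^+ alpha (sigma i) j)
     * (\prod_(i | ~~ inJ i) Bcoef i ^+ alpha (sigma i) j)
     * (\prod_(k | inH k && (k != t))
          (Bcoef k / `|Acoef k| - Acoef k / `|Acoef k| * (Bcoef t / Acoef t))
            ^+ gam k j).

Definition inB_lab (kappa : 'I_m.+1 -> R) : Prop :=
  exists t, is_tau t /\ 0 < Bexpr kappa t.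

(* labelling conventions of the paper for the class P_c:
   beta_11 - alpha_11 <> 0; species 1..r represent the r distinct classes;
   standing assumption: if some rate constants give N positive steady states
   in P_c with 0 < N < oo, then 1 \in H. *)
Definition admissible_lab : Prop :=
  [/\ stoich (sigma ord0) ord0 != 0,
      (forall k1 k2 : 'I_n.+1, (k1 < r)%N -> (k2 < r)%N -> in_class k1 k2 -> k1 = k2),
      (forall i : 'I_n.+1, exists k : 'I_n.+1, (k < r)%N /\ in_class k i) &
      ((exists kappa N, pos_rates kappa /\ (0 < N)%N /\ exactly kappa c N) ->
         inH ord0)].

End Labelling.

Definition inB (lab : ('I_n -> R) -> {perm 'I_n.+1} * nat)
    (kappa : 'I_m.+1 -> R) (c : 'I_n -> R) : Prop :=
  inB_lab c (lab c).1 (lab c).2 kappa.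

End Network.

From Pilot Require Import Defs.
From HB Require Import structures.
From mathcomp Require Import all_boot all_order all_algebra all_fingroup.
From mathcomp Require Import reals.
From mathcomp Require Import boolp polyrcf ring lra zify.

Set Implicit Arguments. Unset Strict Implicit. Unset Printing Implicit Defensive.
Import Order.TTheory GRing.Theory Num.Theory.
Local Open Scope ring_scope.

(* Every positive steady state in P_c lies on the line [line t] through P_c, where the
   steady states are the roots [t] of the polynomial P = [net_rate_poly kappa] with
   [line_pos t]; such a steady state is nondegenerate as soon as P'(t) <> 0.  Adding s to
   kappa_1 adds u p to P, with u = N_11 s and p = [mono_poly ord0] positive on the positive
   part of the line.  Near each of the C = cap_pos roots t of P, the polynomial P + u p with
   |u| small changes sign on [t - e, t] (resp. [t, t + e]) whenever P(t - e) (resp. P(t + e))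
   has the sign opposite to u; for one of the two signs of u this happens on at least C of
   the 2C half-intervals, so P + u p still has C positive roots, and by maximality of C no
   others.  A multiple root x of P + u p satisfies u = -P(x)/p(x) and W(x) = 0 for the
   nonzero Wronskian W = P p' - P' p, so all but finitely many u give simple roots only.
   Finally the expression defining B is linear in kappa, so small s keeps (kappa, c) in B. *)

Section ProdDeriv.
Variable R : comNzRingType.

Lemma deriv_prod_seq (I : eqType) (s : seq I) (F : I -> {poly R}) : uniq s ->
  (\prod_(i <- s) F i)^`() = \sum_(l <- s) (F l)^`() * \prod_(i <- s | i != l) F i.
Proof.
elim: s => [|a s IH] /=; first by rewrite !big_nil derivC.
case/andP => a_notin_s s_uniq.
rewrite !big_cons derivM IH // eqxx.
have -> : \prod_(i <- s | i != a) F i = \prod_(i <- s) F i.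
  rewrite -big_filter; congr bigop; apply/all_filterP.
  by apply/allP => x xs; apply: contraNneq a_notin_s => <-.
congr (_ + _); rewrite mulr_sumr; apply: eq_big_seq => l ls.
rewrite big_cons ifT; last by apply: contraNneq a_notin_s => ->.
by rewrite mulrCA.
Qed.

Lemma deriv_prod (I : finType) (F : I -> {poly R}) :
  (\prod_i F i)^`() = \sum_l (F l)^`() * \prod_(i | i != l) F i.
Proof. exact: deriv_prod_seq (index_enum_uniq I). Qed.

End ProdDeriv.

Section Wronskian.
Variable R : numDomainType.

Definition wronskian (P p : {poly R}) : {poly R} := P * p^`() - P^`() * p.

Lemma wronskian_neq0 (P p : {poly R}) t :
  P != 0 -> root P t -> p.[t] != 0 -> wronskian P p != 0.
Proof.
move=> P_neq0 Pt pt_neq0.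
have [[|k] [q /implyP/(_ P_neq0) qt PE]] := multiplicity_XsubC P t.
  by move: Pt; rewrite PE expr0 mulr1 (negbTE qt).
set Y := 'X - t%:P in PE.
pose B := q * Y * p^`() - (q^`() * Y + q * k.+1%:R) * p.
have WE : wronskian P p = Y ^+ k * B.
  rewrite /wronskian PE derivM deriv_exp derivXsubC -mulr_natr /B /= exprS mul1r.
  set Z := Y ^+ k; ring.
have Bt : B.[t] = - (q.[t] * p.[t] * k.+1%:R).
  by rewrite /B /Y !hornerE hornerMn !hornerE subrr; ring.
have B_neq0 : B != 0.
  apply/eqP => B0; move: Bt; rewrite B0 horner0 => /esym/eqP.
  by rewrite oppr_eq0 !mulf_eq0 -rootE (negbTE qt) (negbTE pt_neq0) pnatr_eq0.
by rewrite WE mulf_neq0 // expf_neq0 // polyXsubC_eq0.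
Qed.

End Wronskian.

Section RealField.
Variable R : realFieldType.

Definition open_pred (U : R -> Prop) :=
  forall t, U t -> exists2 e, 0 < e & forall x, `|x - t| < e -> U x.

Lemma ex_small_pos_seq (I : eqType) (s : seq I) (Q : I -> R -> Prop) :
  {in s, forall i e e', e' <= e -> Q i e -> Q i e'} ->
  {in s, forall i, exists2 e, 0 < e & Q i e} ->
  exists2 e, 0 < e & forall i, i \in s -> Q i e.
Proof.
elim: s => [|a s IH] Q_anti Qs; first by exists 1.
have [e1 e10 Qa] := Qs a (mem_head _ _).
have sub_s : {subset s <= a :: s} by move=> i si; rewrite inE si orbT.
have [e2 e20 Qs'] := IH (sub_in1 sub_s Q_anti) (sub_in1 sub_s Qs).
exists (Num.min e1 e2) => [|i]; first by rewrite lt_min e10 e20.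
rewrite inE => /predU1P [->|si].
  by apply: (Q_anti _ (mem_head _ _) e1) Qa; rewrite ge_min lexx.
by apply: (Q_anti _ (sub_s _ si) e2) (Qs' i si); rewrite ge_min lexx orbT.
Qed.

Lemma small_perturbation_gt0 (a b : R) : 0 < a ->
  exists2 e, 0 < e & forall s, `|s| < e -> 0 < a + s * b.
Proof.
move=> a_gt0; have b1_gt0 : 0 < `|b| + 1 by rewrite ltr_wpDl.
exists (a / (`|b| + 1)) => [|s]; first exact: divr_gt0.
rewrite ltr_pdivlMr // mulrDr mulr1 => s_small.
have : - (s * b) <= `|s| * `|b| by rewrite -normrM -normrN ler_norm.
have : 0 <= `|s| by [].
lra.
Qed.

Definition shrink (e : R) (k : nat) : R := e / k.+2%:R.

Lemma shrink_gt0 e k : 0 < e -> 0 < shrink e k.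
Proof. by move=> e0; rewrite divr_gt0. Qed.

Lemma shrink_lt e k : 0 < e -> shrink e k < e.
Proof. by move=> e0; rewrite ltr_pdivrMr ?ltr0Sn // ltr_pMr // ltr1n. Qed.

Lemma shrink_inj e : e != 0 -> injective (shrink e).
Proof.
move=> e_neq0 a b /(mulfI e_neq0)/invr_inj/eqP.
by rewrite eqr_nat !eqSS => /eqP.
Qed.

Lemma ball_not_subset_seq (T : seq R) t e :
  0 < e -> ~ (forall x, `|x - t| < e -> x \in T).
Proof.
move=> e_gt0 ballT.
have : (size [seq (t + shrink e k)%R | k <- iota 0 (size T).+1] <= size T)%N.
  apply: uniq_leq_size => [|x /mapP [k _ ->]].
    by rewrite map_inj_uniq ?iota_uniq // => a b /addrI/(shrink_inj (lt0r_neq0 e_gt0)).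
  by apply: ballT; rewrite addrC addKr gtr0_norm ?shrink_gt0 ?shrink_lt.
by rewrite size_map size_iota ltnn.
Qed.

Lemma sign_majority (I : eqType) (s : seq I) (f : I -> R) :
  all (fun i => f i != 0) s ->
  exists2 sg : R, (sg == 1) || (sg == -1) &
    (size s <= 2 * count (fun i => f i * sg < 0)%R s)%N.
Proof.
move=> s_neq0.
have count_signs : (count (fun i => f i * 1 < 0)%R s +
                     count (fun i => f i * -1 < 0)%R s = size s)%N.
  rewrite -(count_predC (fun i => f i * 1 < 0)); congr addn.
  apply: eq_in_count => i /(allP s_neq0) fi_neq0 /=.
  by rewrite mulr1 mulrN1 oppr_lt0 lt_def fi_neq0 -leNgt.
have [le|lt] := leqP (count (fun i => f i * -1 < 0) s) (count (fun i => f i * 1 < 0) s).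
  by exists 1; [rewrite eqxx | lia].
by exists (-1); [rewrite eqxx orbT | lia].
Qed.

Lemma separating_radius (U : R -> Prop) (T : seq R) :
  open_pred U -> (forall t, t \in T -> U t) ->
  exists2 e, 0 < e & forall t, t \in T ->
    (forall t', t' \in T -> t' != t -> 2 * e < `|t - t'|) /\
    (forall x, `|x - t| <= e -> U x).
Proof.
move=> U_open TU; apply: ex_small_pos_seq => [t _ e e' le [sep ball] | t tT].
  split=> [t' t'T ne|x xt]; last by apply: ball; apply: le_trans xt le.
  by apply: le_lt_trans (sep _ t'T ne); lra.
have [e1 e1_gt0 sep] : exists2 e, 0 < e &
    forall t', t' \in T -> t' != t -> 2 * e < `|t - t'|.
  apply: ex_small_pos_seq => [t' _ a b ba sep ne|t' _].
    by apply: le_lt_trans (sep ne); lra.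
  have [->|ne] := eqVneq t' t; first by exists 1.
  have dist_gt0 : 0 < `|t - t'| by rewrite normr_gt0 subr_eq0 eq_sym.
  by exists (`|t - t'| / 4) => [|_]; [rewrite divr_gt0 | lra].
have [e2 e2_gt0 ball] := U_open t (TU t tT).
exists (Num.min e1 (e2 / 2)) => [|]; first by rewrite lt_min e1_gt0 divr_gt0.
have m1 : Num.min e1 (e2 / 2) <= e1 by rewrite ge_min lexx.
have m2 : Num.min e1 (e2 / 2) <= e2 / 2 by rewrite ge_min lexx orbT.
split=> [t' t'T ne|x xt]; first by apply: le_lt_trans (sep _ t'T ne); lra.
by apply: ball; lra.
Qed.

Lemma perturbed_sign_change (sg eta a pt pz : R) : (sg == 1) || (sg == -1) ->
  0 < eta -> 0 < pt -> 0 < pz -> a * sg < 0 -> eta * pz < `|a| ->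
  (a + sg * eta * pz) * (sg * eta * pt) < 0.
Proof.
move=> /orP[] /eqP -> eta_gt0 pt_gt0 pz_gt0 a_sg small.
  rewrite mulr1 in a_sg; rewrite ltr0_norm // in small.
  have : 0 < eta * pt by rewrite mulr_gt0.
  rewrite !mul1r; nra.
rewrite mulrN1 oppr_lt0 in a_sg; rewrite gtr0_norm // in small.
have : 0 < eta * pt by rewrite mulr_gt0.
rewrite !mulN1r !mulNr; nra.
Qed.

End RealField.

Section RootsInIntervals.
Variable R : rcfType.

Lemma roots_in_disjoint_intervals (I : eqType) (iv : I -> R * R) (Q : {poly R})
    (D : seq I) :
  uniq D ->
  {in D &, forall d d', d != d' -> ((iv d).2 <= (iv d').1) || ((iv d').2 <= (iv d).1)} ->
  {in D, forall d, (iv d).1 <= (iv d).2 /\ Q.[(iv d).1] * Q.[(iv d).2] < 0} ->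
  exists L : seq R, [/\ uniq L, size L = size D &
    forall x, x \in L -> root Q x /\ exists2 d, d \in D & (iv d).1 < x < (iv d).2].
Proof.
elim: D => [|d D IH] /=; first by exists [::].
case/andP=> d_notin_D D_uniq disj sgn.
have subD : {subset D <= d :: D} by move=> a aD; rewrite inE aD orbT.
have [L [L_uniq sizeL HL]] := IH D_uniq (sub_in2 subD disj) (sub_in1 subD sgn).
have [le sgd] := sgn d (mem_head _ _).
have [x + Qx] := poly_ivtoo le sgd; rewrite in_itv /= => xd.
exists (x :: L); split => /=; [|by rewrite sizeL|].
  rewrite L_uniq andbT; apply/negP => /HL [_ [d' d'D xd']].
  have d_neq : d != d' by apply: contraNneq d_notin_D => ->.
  move/(disj d d' (mem_head _ _) (subD _ d'D)): d_neq.
  move: xd xd'; case: (iv d) => a b; case: (iv d') => a' b' /=.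
  move=> /andP[ax xb] /andP[a'x xb'] /orP[] sep.
    by have := lt_trans a'x (lt_le_trans xb sep); rewrite ltxx.
  by have := lt_trans ax (lt_le_trans xb' sep); rewrite ltxx.
move=> y; rewrite inE => /predU1P [->|/HL [Qy [d' d'D yd']]].
  by split=> //; exists d; rewrite ?mem_head.
by split=> //; exists d'; rewrite ?subD.
Qed.

End RootsInIntervals.

Section RootPerturbation.
Variable R : rcfType.
Variable U : R -> Prop.

Definition simple_roots_on (Q : {poly R}) :=
  forall x, U x -> root Q x -> ~~ root Q^`() x.

Variables (P p : {poly R}).
Hypothesis p_gt0 : forall x, U x -> 0 < p.[x].

Lemma ex_simple_roots_perturbation (f : nat -> R) :
  wronskian P p != 0 -> injective f -> exists k, simple_roots_on (P + f k *: p).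
Proof.
move=> W_neq0 f_inj; apply: contrapT => /forallNP not_simple.
have multiple k : exists x,
    [/\ U x, root (P + f k *: p) x & root (P + f k *: p)^`() x].
  apply: contrapT => /forallNP no_multiple; apply: (not_simple k) => x Ux Qx.
  by apply/negP => Q'x; apply: (no_multiple x).
have [g gP] := choice multiple.
have g_spec k : root (wronskian P p) (g k) /\ f k = - P.[g k] / p.[g k].
  have [Ux] := gP k; rewrite derivD derivZ /root !hornerD !hornerZ => /eqP Pg /eqP P'g.
  have pg_neq0 := lt0r_neq0 (p_gt0 Ux).
  have PE : P.[g k] = - (f k * p.[g k]) by lra.
  have P'E : P^`().[g k] = - (f k * p^`().[g k]) by lra.
  split; last by rewrite PE; field.
  by rewrite /root /wronskian !hornerE PE P'E; apply/eqP; ring.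
have g_inj : injective g.
  by move=> a b gab; apply: f_inj; rewrite (g_spec a).2 (g_spec b).2 gab.
pose rs := [seq g k | k <- iota 0 (size (wronskian P p))].
have : (size rs < size (wronskian P p))%N.
  apply: max_poly_roots W_neq0 _ _; last by rewrite map_inj_uniq ?iota_uniq.
  by apply/allP => x /mapP [k _ ->]; exact: (g_spec k).1.
by rewrite size_map size_iota ltnn.
Qed.

Variable T : seq R.
Hypothesis U_open : open_pred U.
Hypothesis T_uniq : uniq T.
Hypothesis T_roots : forall x, x \in T <-> U x /\ root P x.

Lemma enum_roots_poly_neq0 : (0 < size T)%N -> P != 0.
Proof.
move=> T_gt0; apply/eqP => P0.
have /T_roots [Ut _] := mem_nth 0 T_gt0.
have [e e_gt0 ball] := U_open Ut.
apply: (ball_not_subset_seq e_gt0) => x /ball Ux.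
by apply/T_roots; rewrite P0 /root horner0.
Qed.

Lemma enum_roots_wronskian_neq0 : (0 < size T)%N -> wronskian P p != 0.
Proof.
move=> T_gt0; have /T_roots [Ut Pt] := mem_nth 0 T_gt0.
exact: wronskian_neq0 (enum_roots_poly_neq0 T_gt0) Pt (lt0r_neq0 (p_gt0 Ut)).
Qed.

(* [lra] does not use section hypotheses, hence the local copies of [e_gt0]. *)
Section Sides.
Variable e : R.
Hypothesis e_gt0 : 0 < e.
Hypothesis e_sep : forall t, t \in T ->
  (forall t', t' \in T -> t' != t -> 2 * e < `|t - t'|) /\
  (forall x, `|x - t| <= e -> U x).

Definition sides : seq (R * bool) := [seq (t, b) | t <- T, b <- [:: true; false]].
Definition endpoint (d : R * bool) := if d.2 then d.1 - e else d.1 + e.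
Definition side_interval (d : R * bool) :=
  if d.2 then (d.1 - e, d.1) else (d.1, d.1 + e).

Lemma sides_T d : d \in sides -> d.1 \in T.
Proof. by case/allpairsP => -[t b] [tT _ ->]. Qed.

Lemma sides_uniq : uniq sides.
Proof. by rewrite allpairs_uniq // => -[? ?] [? ?] _ _ [-> ->]. Qed.

Lemma size_sides : size sides = (size T * 2)%N.
Proof. by rewrite size_allpairs. Qed.

Lemma endpoint_U d : d \in sides -> U (endpoint d).
Proof.
case: d => t b /sides_T /e_sep [_ ball]; apply: ball.
have e0 := e_gt0.
by case: b; rewrite /endpoint /= ler_distl; apply/andP; split; lra.
Qed.

Lemma endpoint_not_root d : d \in sides -> P.[endpoint d] != 0.
Proof.
move=> dS; apply/negP => Pz.
have zT : endpoint d \in T by apply/T_roots; split; [exact: endpoint_U|].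
have [sep _] := e_sep (sides_T dS).
have e0 := e_gt0.
case: d {dS Pz} zT sep => t b zT sep.
have z_neq : endpoint (t, b) != t.
  by rewrite /endpoint; case: b {zT sep} => /=; apply/negP => /eqP; lra.
move: (sep _ zT z_neq); rewrite /endpoint.
by case: b {zT z_neq sep} => /=; rewrite ltr_normr => /orP []; lra.
Qed.

Lemma side_interval_U d x :
  d \in sides -> (side_interval d).1 < x < (side_interval d).2 -> U x.
Proof.
case: d => t b /sides_T /e_sep [_ ball] xI; apply: ball; rewrite ler_distl.
have e0 := e_gt0.
by rewrite /side_interval; case: b xI => /= /andP[? ?]; apply/andP; split; lra.
Qed.

Lemma side_intervals_disjoint : {in sides &, forall d d', d != d' ->
  ((side_interval d).2 <= (side_interval d').1) ||
  ((side_interval d').2 <= (side_interval d).1)}.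
Proof.
move=> [t b] [t' b'] /sides_T /= tT /sides_T /= t'T ne; rewrite /side_interval /=.
have [tt'|tt'] := eqVneq t' t.
  by move: ne; rewrite tt'; case: b; case: b'; rewrite /= ?eqxx ?lexx ?orbT.
have e0 := e_gt0.
have := (e_sep tT).1 _ t'T tt'; rewrite ltr_normr => /orP [] far; apply/orP.
  by right; case: b {ne}; case: b' => /=; lra.
by left; case: b {ne}; case: b' => /=; lra.
Qed.

Lemma side_sign_change (sg eta : R) d : (sg == 1) || (sg == -1) -> 0 < eta ->
  d \in sides -> P.[endpoint d] * sg < 0 -> eta * p.[endpoint d] < `|P.[endpoint d]| ->
  (side_interval d).1 <= (side_interval d).2 /\
  (P + (sg * eta) *: p).[(side_interval d).1] *
  (P + (sg * eta) *: p).[(side_interval d).2] < 0.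
Proof.
move=> sgE eta_gt0 dS Pz_sg small.
have pz_gt0 := p_gt0 (endpoint_U dS).
case: d dS Pz_sg small pz_gt0 => t b dS Pz_sg small pz_gt0.
have /T_roots [/p_gt0 pt_gt0 /eqP Pt] : t \in T := sides_T dS.
have := perturbed_sign_change sgE eta_gt0 pt_gt0 pz_gt0 Pz_sg small.
have e0 := e_gt0.
rewrite /side_interval /endpoint; case: b {dS Pz_sg small pz_gt0} => /= change;
  rewrite !hornerD !hornerZ Pt add0r; last rewrite mulrC.
  by split=> //; lra.
by split=> //; lra.
Qed.

Lemma perturbed_side_roots (sg eta : R) : (sg == 1) || (sg == -1) -> 0 < eta ->
  (forall d, d \in sides -> eta * p.[endpoint d] < `|P.[endpoint d]|) ->
  exists2 L : seq R, uniq L &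
    size L = count (fun d => P.[endpoint d] * sg < 0) sides /\
    forall x, x \in L -> U x /\ root (P + (sg * eta) *: p) x.
Proof.
move=> sgE eta_gt0 small.
pose D := [seq d <- sides | P.[endpoint d] * sg < 0].
have DS : {subset D <= sides} by move=> d; rewrite mem_filter => /andP[].
have D_sg : {in D, forall d, P.[endpoint d] * sg < 0}.
  by move=> d; rewrite mem_filter => /andP[].
have [L [L_uniq sizeL HL]] := roots_in_disjoint_intervals
  (filter_uniq _ sides_uniq) (sub_in2 DS side_intervals_disjoint)
  (fun d dD => side_sign_change sgE eta_gt0 (DS _ dD) (D_sg _ dD) (small _ (DS _ dD))).
exists L => //; split; first by rewrite sizeL size_filter.
by move=> x /HL [Qx [d dD xd]]; split=> //; exact: side_interval_U (DS _ dD) xd.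
Qed.

Lemma ex_endpoint_bound : exists2 eta, 0 < eta &
  forall d, d \in sides -> eta * p.[endpoint d] < `|P.[endpoint d]|.
Proof.
apply: ex_small_pos_seq => [d dS a b ba small | d dS].
  have pz_gt0 := p_gt0 (endpoint_U dS).
  by apply: le_lt_trans small; rewrite ler_pM2r.
have pz_gt0 := p_gt0 (endpoint_U dS).
have Pz_gt0 : 0 < `|P.[endpoint d]| by rewrite normr_gt0 endpoint_not_root.
exists (`|P.[endpoint d]| / 2 / p.[endpoint d]); first by rewrite !divr_gt0.
by rewrite divfK ?lt0r_neq0 //; lra.
Qed.

End Sides.

Lemma perturbed_roots eps : 0 < eps -> (0 < size T)%N ->
  exists u, [/\ `|u| < eps, simple_roots_on (P + u *: p) &
    exists2 L : seq R, uniq L &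
      (size T <= size L)%N /\ forall x, x \in L -> U x /\ root (P + u *: p) x].
Proof.
move=> eps_gt0 T_gt0.
have [e e_gt0 e_sep] := separating_radius U_open (fun t tT => (proj1 (T_roots t) tT).1).
have Pz_neq0 : all (fun d => P.[endpoint e d] != 0) sides.
  by apply/allP => d; exact: endpoint_not_root.
have [sg sgE many] := sign_majority Pz_neq0.
have [eta1 eta1_gt0 small] := ex_endpoint_bound e_gt0 e_sep.
pose eta0 := Num.min eta1 eps.
have eta0_gt0 : 0 < eta0 by rewrite lt_min eta1_gt0.
have sg_norm : `|sg| = 1 by case/orP: sgE => /eqP ->; rewrite ?normrN normr1.
have sg_neq0 : sg != 0 by rewrite -normr_eq0 sg_norm oner_eq0.
have [k simple] := ex_simple_roots_perturbation (enum_roots_wronskian_neq0 T_gt0)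
  (fun a b ab => shrink_inj (lt0r_neq0 eta0_gt0) (mulfI sg_neq0 ab)).
set eta := shrink eta0 k in simple.
have eta_gt0 : 0 < eta := shrink_gt0 k eta0_gt0.
have eta_lt : eta < eta0 := shrink_lt k eta0_gt0.
have eta_small d : d \in sides -> eta * p.[endpoint e d] < `|P.[endpoint e d]|.
  move=> dS; apply: le_lt_trans (small d dS).
  rewrite ler_pM2r ?(p_gt0 (endpoint_U e_gt0 e_sep dS)) //.
  by apply: le_trans (ltW eta_lt) _; rewrite ge_min lexx.
have [L L_uniq [sizeL HL]] := perturbed_side_roots e_gt0 e_sep sgE eta_gt0 eta_small.
exists (sg * eta); split => //.
  rewrite normrM sg_norm mul1r gtr0_norm //.
  by apply: lt_le_trans eta_lt _; rewrite ge_min lexx orbT.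
exists L => //; split => //.
by rewrite sizeL -(leq_pmul2l (_ : 0 < 2)%N) // [(2 * _)%N]mulnC -size_sides.
Qed.

End RootPerturbation.

Section Network.
Variable R : realType.
Variables (n m : nat) (alpha beta : 'I_n.+1 -> 'I_m.+1 -> nat).
Local Notation N := (stoich R alpha beta).
Local Notation fmap := (fmap alpha beta).
Local Notation pss := (pss alpha beta).
Local Notation exactly := (exactly alpha beta).

Definition shift_rate (kappa : 'I_m.+1 -> R) (s : R) : 'I_m.+1 -> R :=
  fun j => kappa j + (if j == ord0 then s else 0).

Lemma shift_rate_pos kappa s :
  pos_rates kappa -> `|s| < kappa ord0 -> pos_rates (shift_rate kappa s).
Proof.
move=> kpos s_small j; rewrite /shift_rate; case: eqP => [->|_]; last by rewrite addr0.
by move: s_small; rewrite ltr_norml => /andP[? ?]; lra.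
Qed.

Lemma Bexpr_shift_rate c sigma r kappa s t :
  Bexpr alpha beta c sigma r (shift_rate kappa s) t =
  Bexpr alpha beta c sigma r kappa t +
  s * Bexpr alpha beta c sigma r (fun j => if j == ord0 then 1 else 0) t.
Proof.
rewrite /Bexpr mulr_sumr -big_split /=; apply: eq_bigr => j _.
by rewrite /shift_rate; case: (j == ord0); ring.
Qed.

Lemma inW0_nondeg (kappa : 'I_m.+1 -> R) (c : 'I_n -> R) :
  inW alpha beta 0 kappa c -> inWnondeg alpha beta 0 kappa c.
Proof.
move=> kW; split=> // x; case: kW => _ [l [_ [/size0nil l0 l_pss]]].
by move/l_pss; rewrite l0 in_nil.
Qed.

Hypothesis N00_neq0 : N ord0 ord0 != 0.
Hypothesis rankN : \rank N = 1%N.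

Definition sdir (i : 'I_n.+1) : R := N i ord0 / N ord0 ord0.

Lemma sdir0 : sdir ord0 = 1.
Proof. exact: divff. Qed.

Lemma stoich_rank1 i j : N i j = sdir i * N ord0 j.
Proof.
have row0_neq0 : row ord0 N != 0.
  by apply: contra N00_neq0 => /eqP/matrixP/(_ ord0 ord0); rewrite !mxE => ->.
have /andP [_ N_row0] : (row ord0 N == N)%MS.
  by rewrite -(mxrank_leqif_eq (row_sub _ _)).2 rank_rV row0_neq0 rankN.
have /sub_rVP [k rowE] := submx_trans (row_sub i N) N_row0.
have NE j' : N i j' = k * N ord0 j' by move/matrixP: rowE => /(_ ord0 j'); rewrite !mxE.
by rewrite NE /sdir (NE ord0) mulfK //.
Qed.

Definition net_rate (kappa : 'I_m.+1 -> R) (x : 'cV[R]_n.+1) : R :=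
  \sum_j N ord0 j * (kappa j * \prod_i x i ord0 ^+ alpha i j).

Lemma fmapE kappa x i : fmap kappa x i ord0 = sdir i * net_rate kappa x.
Proof.
rewrite /Defs.fmap /net_rate mxE mulr_sumr; apply: eq_bigr => j _.
by rewrite (stoich_rank1 i j) /rate mxE !mulrA.
Qed.

Lemma fmap_eq0 kappa x : fmap kappa x = 0 <-> net_rate kappa x = 0.
Proof.
split=> [/matrixP/(_ ord0 ord0)|net0]; first by rewrite fmapE sdir0 mul1r mxE.
by apply/matrixP => i j; rewrite (ord1 j) fmapE net0 mulr0 mxE.
Qed.

Definition net_rate_slope (kappa : 'I_m.+1 -> R) (x : 'cV[R]_n.+1) : R :=
  \sum_l sdir l * \sum_j N ord0 j *
     (kappa j * ((alpha l j)%:R * x l ord0 ^+ (alpha l j).-1 *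
        \prod_(i | i != l) x i ord0 ^+ alpha i j)).

Lemma jac_stoich kappa x : jac alpha beta kappa x *m N = net_rate_slope kappa x *: N.
Proof.
apply/matrixP => i k; rewrite [LHS]mxE [RHS]mxE (stoich_rank1 i k) mulr_suml.
apply: eq_bigr => l _.
rewrite (stoich_rank1 l k) /jac mxE mulr_suml mulr_sumr mulr_suml.
by apply: eq_bigr => j _; rewrite (stoich_rank1 i j); set T := kappa j * _; ring.
Qed.

Lemma nondeg_of_slope kappa x : net_rate_slope kappa x != 0 -> nondeg alpha beta kappa x.
Proof.
by move=> slope_neq0; rewrite /nondeg jac_stoich linearZ; apply/eqmxP/eqmx_scale.
Qed.

Variable c : 'I_n -> R.
Local Notation basept := (basept alpha beta c).

Definition line (t : R) : 'cV[R]_n.+1 := \col_i (sdir i * t + basept i).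

Definition line_pos (t : R) := forall i, 0 < line t i ord0.

Definition species_poly (i : 'I_n.+1) : {poly R} := sdir i *: 'X + (basept i)%:P.

Definition mono_poly (j : 'I_m.+1) : {poly R} := \prod_i species_poly i ^+ alpha i j.

Definition net_rate_poly (kappa : 'I_m.+1 -> R) : {poly R} :=
  \sum_j (N ord0 j * kappa j) *: mono_poly j.

Lemma species_polyE i t : (species_poly i).[t] = line t i ord0.
Proof. by rewrite /species_poly hornerD hornerZ hornerX hornerC mxE. Qed.

Lemma net_rate_polyE kappa t : (net_rate_poly kappa).[t] = net_rate kappa (line t).
Proof.
rewrite horner_sum; apply: eq_bigr => j _.
rewrite hornerZ horner_prod -mulrA; congr (_ * (_ * _)).
by apply: eq_bigr => i _; rewrite horner_exp species_polyE.
Qed.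

Lemma deriv_net_rate_polyE kappa t :
  (net_rate_poly kappa)^`().[t] = net_rate_slope kappa (line t).
Proof.
rewrite /net_rate_poly (big_morph _ (@derivD R) (deriv0 R)) horner_sum /net_rate_slope.
under [RHS]eq_bigr do rewrite mulr_sumr.
rewrite exchange_big; apply: eq_bigr => j _.
rewrite derivZ hornerZ deriv_prod horner_sum mulr_sumr; apply: eq_bigr => l _.
rewrite deriv_exp /species_poly derivD derivZ derivX derivC addr0 alg_polyC -/(species_poly l).
rewrite hornerM hornerMn hornerM hornerC horner_exp species_polyE horner_prod.
under eq_bigr do rewrite horner_exp species_polyE.
by rewrite -mulr_natr; set Q := \prod_(_ | _) _; ring.
Qed.

Lemma basept0 : basept ord0 = 0.
Proof. by rewrite /Defs.basept unlift_none. Qed.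

Lemma line00 t : line t ord0 ord0 = t.
Proof. by rewrite mxE sdir0 basept0 mul1r addr0. Qed.

Lemma in_P_line x : in_P alpha beta c x -> x = line (x ord0 ord0).
Proof.
move=> [_ Px]; apply/matrixP => i j; rewrite (ord1 j) mxE.
case: (unliftP ord0 i) => [i'|] ->; last by rewrite sdir0 basept0 mul1r addr0.
by have := Px i'; rewrite /Defs.basept liftK /sdir => <-; field.
Qed.

Lemma pssP kappa x : pss kappa c x <->
  [/\ x = line (x ord0 ord0), line_pos (x ord0 ord0) &
      root (net_rate_poly kappa) (x ord0 ord0)].
Proof.
split=> [[xpos [xP fx0]]|[xE tpos troot]].
  have xE := in_P_line xP; split=> //; first by move=> i; rewrite -xE.
  by rewrite /root net_rate_polyE -xE; apply/eqP/fmap_eq0.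
rewrite xE; split=> //; split; last first.
  by apply/fmap_eq0; rewrite -net_rate_polyE; apply/eqP.
split=> [i|i]; first exact/ltW/tpos.
by rewrite line00 [line _ (lift _ _) _]mxE /Defs.basept liftK /sdir; field.
Qed.

Lemma line_pos_open : open_pred line_pos.
Proof.
move=> t tpos.
have [e e_gt0 near_t] : exists2 e, 0 < e & forall i, i \in enum 'I_n.+1 ->
    forall x, `|x - t| < e -> 0 < line x i ord0.
  apply: ex_small_pos_seq => [i _ e e' le near_t x xt | i _].
    by apply: near_t; apply: lt_le_trans xt le.
  have [e e_gt0 small] := small_perturbation_gt0 (sdir i) (tpos i).
  exists e => // x /small.
  by rewrite (_ : line x i ord0 = line t i ord0 + (x - t) * sdir i) // !mxE; ring.
by exists e => // x xt i; exact: near_t (mem_enum _ i) x xt.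
Qed.

Lemma mono_poly_gt0 j t : line_pos t -> 0 < (mono_poly j).[t].
Proof.
move=> tpos; rewrite horner_prod; apply: prodr_gt0 => i _.
by rewrite horner_exp species_polyE exprn_gt0.
Qed.

Lemma net_rate_poly_shift kappa s :
  net_rate_poly (shift_rate kappa s) =
  net_rate_poly kappa + (N ord0 ord0 * s) *: mono_poly ord0.
Proof.
rewrite /net_rate_poly /shift_rate.
under eq_bigr do rewrite mulrDr scalerDl.
rewrite big_split /=; congr (_ + _).
rewrite (bigD1 ord0) //= big1 ?addr0 // => j /negbTE ->.
by rewrite mulr0 scale0r.
Qed.

Lemma exactly_roots kappa k : exactly kappa c k ->
  exists2 T : seq R, uniq T & size T = k /\
    forall t, t \in T <-> line_pos t /\ root (net_rate_poly kappa) t.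
Proof.
move=> [l [l_uniq [<- l_pss]]].
exists [seq (x : 'cV[R]_n.+1) ord0 ord0 | x <- l]; last split.
- rewrite map_inj_in_uniq // => x y /l_pss/pssP [xE _ _] /l_pss/pssP [yE _ _] xy.
  by rewrite xE yE xy.
- by rewrite size_map.
split=> [/mapP [x /l_pss/pssP [_ xpos xroot] ->] //|[tpos troot]].
apply/mapP; exists (line t); last by rewrite line00.
by apply/l_pss/pssP; rewrite line00.
Qed.

Lemma nondeg_perturbation kappa C eps :
  (forall kappa', pos_rates kappa' -> exists k, exactly kappa' c k /\ (k <= C)%N) ->
  pos_rates kappa -> exactly kappa c C -> (0 < C)%N -> 0 < eps -> eps <= kappa ord0 ->
  exists s, `|s| < eps /\ inWnondeg alpha beta C (shift_rate kappa s) c.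
Proof.
move=> cap kpos /exactly_roots [T T_uniq [sizeT T_roots]] C_gt0 eps_gt0 eps_le.
have N00_gt0 : 0 < `|N ord0 ord0| by rewrite normr_gt0.
have [u [u_small simple [L L_uniq [sizeL L_roots]]]] :=
  perturbed_roots (@mono_poly_gt0 ord0) line_pos_open T_uniq T_roots
    (mulr_gt0 eps_gt0 N00_gt0) (leq_trans C_gt0 (eq_leq (esym sizeT))).
pose s := u / N ord0 ord0.
have us : N ord0 ord0 * s = u by rewrite mulrC divfK.
have s_small : `|s| < eps by rewrite normrM normfV ltr_pdivrMr.
have shifted_pos := shift_rate_pos kpos (lt_le_trans s_small eps_le).
have [k [shifted_ex k_le]] := cap _ shifted_pos.
have [T' T'_uniq [sizeT' T'_roots]] := exactly_roots shifted_ex.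
have C_le : (C <= k)%N.
  rewrite -sizeT -sizeT'; apply: leq_trans sizeL (uniq_leq_size L_uniq _) => x.
  by move/L_roots => xroot; apply/T'_roots; rewrite net_rate_poly_shift us.
exists s; split=> //; split; first split=> //.
  suff -> : C = k by [].
  by apply/eqP; rewrite eqn_leq C_le k_le.
move=> x /pssP [xE xpos xroot]; rewrite xE; apply: nondeg_of_slope.
rewrite -deriv_net_rate_polyE net_rate_poly_shift us.
by apply: simple xpos _; rewrite -us -net_rate_poly_shift.
Qed.

End Network.

Theorem corollary6p5 (R : realType) (n m : nat)
    (alpha beta : 'I_n.+1 -> 'I_m.+1 -> nat) (C : nat)
    (lab : ('I_n -> R) -> {perm 'I_n.+1} * nat) :
  valid_network alpha beta ->
  one_dim R alpha beta ->
  alpha ord0 ord0 <> beta ord0 ord0 ->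
  cap_pos_eq R alpha beta C ->
  (forall c : 'I_n -> R, admissible_lab alpha beta c (lab c).1 (lab c).2) ->
  ((exists (kappa : 'I_m.+1 -> R) (c : 'I_n -> R),
      inW alpha beta C kappa c /\ inB alpha beta lab kappa c) <->
   (exists (kappa : 'I_m.+1 -> R) (c : 'I_n -> R),
      inWnondeg alpha beta C kappa c /\ inB alpha beta lab kappa c)).
Proof.
move=> _ rankN a00 [_ cap] _; split; last first.
  by move=> [kappa [c [[kW _] kB]]]; exists kappa, c.
move=> [kappa [c [[kpos kex] [t [tau kB]]]]].
have N00_neq0 : stoich R alpha beta ord0 ord0 != 0.
  by rewrite mxE subr_eq0 eqr_nat eq_sym; apply/eqP.
have [C0|C_gt0] := posnP C.
  by exists kappa, c; split; [rewrite C0 in kex *; exact: inW0_nondeg | exists t].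
have [e e_gt0 B_stable] := small_perturbation_gt0
  (Bexpr alpha beta c (lab c).1 (lab c).2 (fun j => if j == ord0 then 1 else 0) t) kB.
have eps_gt0 : 0 < Num.min e (kappa ord0) by rewrite lt_min e_gt0 kpos.
have eps_le : Num.min e (kappa ord0) <= kappa ord0 by rewrite ge_min lexx orbT.
have [s [s_small s_nondeg]] := nondeg_perturbation N00_neq0 rankN (fun k => cap k c)
  kpos kex C_gt0 eps_gt0 eps_le.
exists (shift_rate kappa s), c; split=> //; exists t; split=> //.
rewrite Bexpr_shift_rate; apply: B_stable; apply: lt_le_trans s_small _.
by rewrite ge_min lexx.
Qed.
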